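(* Let $n\ge 2$, let $(A,+)$ be a non-trivial finite Abelian group and let $w$ be an $A$-arc-labelling of $\overleftrightarrow{K}_n$. Then there exists an $A$-arc-labelling $w'$ of $\overleftrightarrow{K}_n$ which is switching-equivalent to $w$ such that at least one of the following holds: (1) there exist a vertex set $V\subseteq V(\overleftrightarrow{K}_n)$ with $|V|\ge n-4|A|$ and a proper subgroup $B<A$ such that $w'(x,y)\in B$ for every arc $(x,y)$ of the induced subdigraph $\overleftrightarrow{K}_n[V]$; (2) there exist vertices $u,v\in V(\overleftrightarrow{K}_n)$ such that $w'$ is $A$-complete at $u,v$.
   Context: $\overleftrightarrow{K}_n$ denotes the complete digraph on $n$ vertices whose arc set consists of all ordered pairs of distinct vertices. An $A$-arc-labelling of $\overleftrightarrow{K}_n$ is a function $w$ from its arc set to $A$. The labelling $w$ is $A$-complete at vertices $u,v$ if for every $a\in A$ there is a directed path $P_a$ from $u$ to $v$ with $\sum_{(x,y)\in P_a} w(x,y)=a$. For a vertex $v$ and $c\in A$, the switching by $c$ at $v$ transforms $w$ into $w'$ with $w'(x,y)=w(x,y)$ if $x,y\ne v$, $w'(x,y)=w(x,y)+c$ if $x=v$, and $w'(x,y)=w(x,y)-c$ if $y=v$. Two $A$-arc-labellings are switching-equivalent if one can be obtained from the other by a finite sequence of switchings. *)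

From HB Require Import structures.
From mathcomp Require Import all_boot all_order all_algebra.
Set Implicit Arguments. Unset Strict Implicit. Unset Printing Implicit Defensive.
Import GRing.Theory.
Local Open Scope ring_scope.

(* Vertices of the complete digraph K_n are 'I_n; arcs are pairs (x,y), x != y.
   An A-arc-labelling is a function w : 'I_n -> 'I_n -> A; its values on the
   diagonal (x,x) are not arcs and never used. *)
Definition labelling (A : zmodType) (n : nat) := 'I_n -> 'I_n -> A.

Definition switch (A : zmodType) (n : nat) (w : labelling A n) (v : 'I_n) (c : A)
  : labelling A n :=
  fun x y => w x y + (if x == v then c else 0) - (if y == v then c else 0).

Inductive switch_equiv (A : zmodType) (n : nat) (w : labelling A n)
  : labelling A n -> Prop :=
| sw_refl : switch_equiv w w
| sw_step : forall w1 v c, switch_equiv w w1 -> switch_equiv w (switch w1 v c).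

Definition walk_weight (A : zmodType) (n : nat) (w : labelling A n)
  (u : 'I_n) (p : seq 'I_n) : A :=
  \sum_(e <- zip (u :: p) p) w e.1 e.2.

(* u :: p is a directed path from u to v in K_n: vertices pairwise distinct
   (hence all consecutive pairs are arcs) and ending at v. *)
Definition dipath (n : nat) (u v : 'I_n) (p : seq 'I_n) : bool :=
  uniq (u :: p) && (last u p == v).

Definition A_complete (A : finZmodType) (n : nat) (w : labelling A n) (u v : 'I_n) :=
  forall a : A, exists p : seq 'I_n, dipath u v p /\ walk_weight w u p = a.

Definition is_subgroup (A : finZmodType) (B : {set A}) : Prop :=
  0 \in B /\ (forall x y, x \in B -> y \in B -> x - y \in B).

From HB Require Import structures.
From mathcomp Require Import all_boot all_order all_algebra.
From mathcomp Require Import zify.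
From Stdlib Require Import FunctionalExtensionality Classical.

(* Grow a set S of weights of u-v paths inside a vertex set U, keeping
   |U| + 2 <= 3|S|.  Appending the path v a c or v a b c through three fresh
   vertices turns S into S + t_ac or S + t_abc, and when these translates differ
   their union is larger than S.  As |S| <= |A| this must stop: either S = A,
   which is A-completeness, or every triangle defect w(a,b) + w(b,c) - w(a,c)
   = t_abc - t_ac outside U lies in the stabiliser of S, a proper subgroup.
   Switching every x by w(r,x) for one fresh vertex r turns w(x,y) into the
   defect of the triangle r x y, so all arcs among the other fresh vertices,
   at least n - 3|A| + 1 of them, get labels in the stabiliser. *)

Set Implicit Arguments.
Unset Strict Implicit.
Unset Printing Implicit Defensive.

Import GRing.Theory.
Local Open Scope ring_scope.

Section Switching.

Variables (A : zmodType) (n : nat).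

Definition reweight (w : labelling A n) (c : 'I_n -> A) : labelling A n :=
  fun x y => w x y + c x - c y.

Lemma reweight0 (w : labelling A n) : reweight w (fun=> 0) = w.
Proof.
by do 2![apply: functional_extensionality => ?]; rewrite /reweight addr0 subr0.
Qed.

Lemma switch_reweight (w : labelling A n) c v d :
  switch (reweight w c) v d = reweight w (fun x => c x + (if x == v then d else 0)).
Proof.
do 2![apply: functional_extensionality => ?].
by rewrite /switch /reweight opprD !addrA (addrAC _ (- c _)).
Qed.

Lemma switch_equiv_reweight (w : labelling A n) c : switch_equiv w (reweight w c).
Proof.
suff sums s : switch_equiv w (reweight w (fun x => \sum_(v <- s | v == x) c v)).
  have := sums (index_enum 'I_n).
  congr switch_equiv; congr reweight.
  by apply: functional_extensionality => x; rewrite big_pred1_eq.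
elim: s => [|v s IHs].
  have -> : (fun x => \sum_(v <- [::] | v == x) c v) = fun=> 0.
    by apply: functional_extensionality => x; rewrite big_nil.
  by rewrite reweight0; exact: sw_refl.
have -> : (fun x => \sum_(u <- v :: s | u == x) c u)
        = fun x => \sum_(u <- s | u == x) c u + (if x == v then c v else 0).
  apply: functional_extensionality => x.
  by rewrite big_cons eq_sym; case: (x == v); rewrite ?addr0 // addrC.
rewrite -switch_reweight; exact: sw_step.
Qed.

End Switching.

Section Walks.

Variables (A : zmodType) (n : nat) (w : labelling A n).

Lemma walk_weight_nil u : walk_weight w u [::] = 0.
Proof. exact: big_nil. Qed.

Lemma walk_weight_cons u x p : walk_weight w u (x :: p) = w u x + walk_weight w x p.
Proof. exact: big_cons. Qed.

Lemma walk_weight_cat u p q :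
  walk_weight w u (p ++ q) = walk_weight w u p + walk_weight w (last u p) q.
Proof.
elim: p u => [|x p IHp] u /=; first by rewrite walk_weight_nil add0r.
by rewrite !walk_weight_cons IHp addrA.
Qed.

Lemma dipath_cat (u v : 'I_n) p q :
  dipath u v p -> uniq q -> ~~ has [in u :: p] q -> dipath u (last v q) (p ++ q).
Proof.
case/andP=> up /eqP <- uq disj.
by rewrite /dipath -cat_cons cat_uniq up disj uq last_cat eqxx.
Qed.

End Walks.

Section Stabiliser.

Variables (A : finZmodType) (S : {set A}).

Definition translate (g : A) : {set A} := [set x + g | x in S].

Definition stab : {set A} := [set g | translate g == S].

Lemma card_translate g : #|translate g| = #|S|.
Proof. exact: (card_imset _ (addIr g)). Qed.

Lemma translate0 : translate 0 = S.
Proof. by rewrite /translate (eq_imset _ (@addr0 A)) imset_id. Qed.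

Lemma translateD g h : [set x + h | x in translate g] = translate (g + h).
Proof. by rewrite -imset_comp; apply: eq_imset => x /=; rewrite addrA. Qed.

Lemma translate_inj g h : translate g = translate h -> g - h \in stab.
Proof.
by move=> tgh; rewrite inE -translateD tgh translateD subrr translate0.
Qed.

Lemma stab_subgroup : is_subgroup stab.
Proof.
split; first by rewrite inE translate0.
move=> g h; rewrite !inE => /eqP tg /eqP th; apply/eqP.
by rewrite -translateD tg -{1}th translateD subrr translate0.
Qed.

Lemma stab_proper : S != set0 -> S != [set: A] -> stab != [set: A].
Proof.
case/set0Pn=> s Ss; apply: contraNN => /eqP stabT; apply/eqP/setP => g.
have /[!inE] /eqP <- : g - s \in stab by rewrite stabT inE.
by apply/imsetP; exists s; rewrite // addrC subrK.
Qed.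

Lemma card_translateU g h :
  translate g != translate h -> (#|S| < #|translate g :|: translate h|)%N.
Proof.
move=> gh; rewrite -(card_translate g); apply/proper_card/properUl.
by apply: contra gh => sub; rewrite eq_sym eqEcard sub !card_translate /=.
Qed.

End Stabiliser.

Section PathSums.

Variables (A : finZmodType) (n : nat) (w : labelling A n).

Definition walk_sums (u v : 'I_n) (U : {set 'I_n}) (S : {set A}) :=
  forall a, a \in S ->
    exists p, [/\ dipath u v p, {subset u :: p <= U} & walk_weight w u p = a].

Lemma walk_sumsU u v U S1 S2 :
  walk_sums u v U S1 -> walk_sums u v U S2 -> walk_sums u v U (S1 :|: S2).
Proof. by move=> sums1 sums2 a /setUP [/sums1 | /sums2]. Qed.

Lemma walk_sumsS u v (U U' : {set 'I_n}) S :
  U \subset U' -> walk_sums u v U S -> walk_sums u v U' S.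
Proof.
move=> /subsetP sUU' sums a /sums [p [up pU wp]].
by exists p; split=> // x /pU /sUU'.
Qed.

Lemma walk_sums_extend u v U S q :
  walk_sums u v U S -> uniq q -> {subset q <= ~: U} ->
  walk_sums u (last v q) (U :|: [set x in q]) (translate S (walk_weight w v q)).
Proof.
move=> sums uq qU _ /imsetP [s /sums [p [up pU wp]] ->].
have vp : last u p = v by case/andP: up => _ /eqP.
exists (p ++ q); split.
- apply: dipath_cat => //; apply/hasPn => x /qU; rewrite inE.
  by apply: contra => /pU.
- by move=> x; rewrite -cat_cons mem_cat !inE => /orP [/pU -> | ->]; rewrite ?orbT.
- by rewrite walk_weight_cat wp vp.
Qed.

Lemma walk_sums_complete u v U : walk_sums u v U [set: A] -> A_complete w u v.
Proof. by move=> sums a; have [p [up _ wp]] := sums a (in_setT a); exists p. Qed.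

Definition path_state u v U S := walk_sums u v U S /\ (#|U| + 2 <= 3 * #|S|)%N.

Definition triangles_in (W : {set 'I_n}) (B : {set A}) :=
  forall a b c, a \in W -> b \in W -> c \in W -> a != b -> b != c -> a != c ->
  w a b + w b c - w a c \in B.

Definition labels_in (w' : labelling A n) (V : {set 'I_n}) (B : {set A}) :=
  forall x y, x \in V -> y \in V -> x != y -> w' x y \in B.

Lemma path_state_grow_or_stuck u v U S :
  path_state u v U S ->
  (exists u' v' U' S', path_state u' v' U' S' /\ (#|S| < #|S'|)%N)
  \/ triangles_in (~: U) (stab S).
Proof.
move=> [sums cardU].
pose t_ac a c := walk_weight w v [:: a; c].
pose t_abc a b c := walk_weight w v [:: a; b; c].
case: (classic (exists a b c, [/\ a \in ~: U, b \in ~: U & c \in ~: U]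
    /\ [/\ a != b, b != c & a != c]
    /\ translate S (t_ac a c) != translate S (t_abc a b c)))
  => [[a [b [c [[aU bU cU] [[ab bc ac] neq]]]]] | stuck].
- left; exists u, c, (U :|: [set x in [:: a; b; c]]).
  exists (translate S (t_ac a c) :|: translate S (t_abc a b c)).
  have growS := card_translateU neq.
  split=> //; split.
    apply: walk_sumsU; last first.
      apply: walk_sums_extend => //; first by rewrite /= !inE negb_or ab ac bc.
      by move=> x; rewrite !inE -in_setC => /or3P [] /eqP ->.
    apply: (@walk_sumsS _ _ (U :|: [set x in [:: a; c]])).
      by apply: setUS; apply/subsetP => x; rewrite !inE => /orP [] ->; rewrite ?orbT.
    apply: walk_sums_extend => //; first by rewrite /= inE ac.
    by move=> x; rewrite !inE -in_setC => /orP [] /eqP ->.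
  have growU : (#|U :|: [set x in [:: a; b; c]]| <= #|U| + 3)%N.
    by apply: leq_trans (leq_card_setU _ _).1 _; rewrite leq_add2l cardsE card_size.
  lia.
- right=> a b c aU bU cU ab bc ac.
  have -> : w a b + w b c - w a c = t_abc a b c - t_ac a c.
    rewrite /t_ac /t_abc !walk_weight_cons !walk_weight_nil !addr0.
    by rewrite opprD addrACA subrr add0r.
  apply: translate_inj; apply/eqP; rewrite eq_sym; apply: contraT => neq.
  by case: stuck; exists a, b, c.
Qed.

Lemma exists_stuck_path_state :
  (0 < n)%N -> exists u v U S, path_state u v U S /\ triangles_in (~: U) (stab S).
Proof.
move=> n_gt0; pose z := Ordinal n_gt0.
suff saturate m u v U (S : {set A}) :
    (#|A| - #|S| <= m)%N -> path_state u v U S ->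
    exists u v U S, path_state u v U S /\ triangles_in (~: U) (stab S).
  apply: (saturate #|A| z z [set z] [set 0]); first exact: leq_subr.
  split; last by rewrite !cards1.
  move=> a /set1P ->; exists [::].
  by split; rewrite /dipath ?walk_weight_nil //= => x /[!inE].
elim: m u v U S => [|m IHm] u v U S mS st.
all: have [[u' [v' [U' [S' [st' growS]]]]] | stuck] := path_state_grow_or_stuck st;
  last by exists u, v, U, S.
- have cardS'A : (#|S'| <= #|A|)%N := max_card S'.
  lia.
- by apply: (IHm u' v' U' S') => //; lia.
Qed.

Lemma triangles_in_switch W B :
  triangles_in W B ->
  exists2 w', switch_equiv w w' &
    exists2 V : {set 'I_n}, (#|W| <= #|V|.+1)%N & labels_in w' V B.
Proof.
move=> tri; have [-> | /set0Pn [r rW]] := eqVneq W set0.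
  exists w; first exact: sw_refl.
  by exists set0 => [|x y]; rewrite ?cards0 ?inE.
exists (reweight w (w r)); first exact: switch_equiv_reweight.
exists (W :\ r); first by rewrite (cardsD1 r W) rW.
move=> x y /setD1P [xr xW] /setD1P [yr yW] xy.
by rewrite /reweight (addrC (w x y)); apply: tri; rewrite // eq_sym.
Qed.

End PathSums.

Theorem lemma5 (A : finZmodType) (n : nat) (w : labelling A n) :
  (2 <= n)%N -> (1 < #|A|)%N ->
  exists w' : labelling A n, switch_equiv w w' /\
    ((exists (V : {set 'I_n}) (B : {set A}),
        (n <= #|V| + 4 * #|A|)%N /\ is_subgroup B /\ B != [set: A] /\
        (forall x y, x \in V -> y \in V -> x != y -> w' x y \in B))
     \/ (exists u v : 'I_n, A_complete w' u v)).
Proof.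
move=> n_ge2 _.
have [u [v [U [S [[sums cardU] stuck]]]]] := exists_stuck_path_state w (ltnW n_ge2).
have [ST | SnT] := eqVneq S [set: A].
  exists w; split; first exact: sw_refl.
  by right; exists u, v; apply: (walk_sums_complete (U := U)); rewrite -ST.
have [w' ww' [V cardV labV]] := triangles_in_switch stuck.
exists w'; split => //; left; exists V, (stab S); split; last split; last split.
- have cardSA : (#|S| <= #|A|)%N := max_card S.
  have cardUC : (#|U| + #|~: U| = n)%N by rewrite cardsC card_ord.
  lia.
- exact: stab_subgroup.
- by apply: stab_proper SnT; rewrite -card_gt0; lia.
- exact: labV.
Qed.
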